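(* Let $\mathcal V$ be a finite alphabet, $\mathcal V^*$ the set of finite strings over $\mathcal V$, $e$ an environment and $p$ a probability distribution on test suites $t\in\mathcal V^*$. Let $$\mathrm{sim}_{p,e}(c_1,c_2):=\mathbb E_{t\sim p}\Big[\tfrac{1}{|t|}\sum_{k=1}^{|t|}\mathbf 1\{O_k(c_1,t\mid e)=O_k(c_2,t\mid e)\}\Big]$$ and, for $s\in\mathbb N$, $\mathrm{sim}^s_{p,e}(c_1,c_2):=\mathrm{sim}_{p,e}(c_1,c_2)^s$. Define functional equivalence $$\mathrm{sim}^\infty_{p,e}(c_1,c_2):=\mathbf 1\{O(c_1,t\mid e)=O(c_2,t\mid e)\ \text{for all } t\in\mathcal V^* \text{ with } p(t)>0\}.$$ Then for every $s\in\mathbb N$, $\mathrm{sim}^s_{p,e}$ is a positive semi-definite kernel on $\mathcal V^*$, and for all $c_1,c_2\in\mathcal V^*$, $\lim_{s\to\infty}\mathrm{sim}^s_{p,e}(c_1,c_2)=\mathrm{sim}^\infty_{p,e}(c_1,c_2)$.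
   Context: A test suite $t\in\mathcal V^*$ consists of $|t|\ge 1$ test cases. For an environment $e$, an implementation $c\in\mathcal V^*$ and a test suite $t$, the test harness returns a deterministic output vector $O(c,t\mid e)=(O_1(c,t\mid e),\dots,O_{|t|}(c,t\mid e))\in\mathbb O^{|t|}$ for a set $\mathbb O$ of possible test outputs. *)

From mathcomp Require Import all_boot all_order all_algebra.
From mathcomp Require Import all_classical all_reals all_analysis.
Set Implicit Arguments. Unset Strict Implicit. Unset Printing Implicit Defensive.
Import Order.TTheory GRing.Theory Num.Theory.
Local Open Scope ring_scope.
Local Open Scope classical_set_scope.

Section Defs.
Variables (R : realType) (V : finType) (Env O : Type).

Definition is_distribution (p : seq V -> R) : Prop :=
  (forall t, 0 <= p t) /\ (\esum_(t in [set: seq V]) (p t)%:E = 1%E).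

(* ncases t = |t|, the number of test cases of the suite t;
   out e c t = O(c, t | e), a vector of ncases t outputs. *)
Variable ncases : seq V -> nat.
Variable out : Env -> seq V -> forall t : seq V, (ncases t).-tuple O.

Definition agree (e : Env) (c1 c2 t : seq V) : R :=
  (ncases t)%:R^-1 *
  \sum_(k < ncases t)
     (if `[< tnth (out e c1 t) k = tnth (out e c2 t) k >] then 1 else 0).

Definition sim (p : seq V -> R) (e : Env) (c1 c2 : seq V) : R :=
  fine (\esum_(t in [set: seq V]) (p t * agree e c1 c2 t)%:E).

Definition sim_pow (p : seq V -> R) (e : Env) (s : nat) (c1 c2 : seq V) : R :=
  sim p e c1 c2 ^+ s.

Definition sim_inf (p : seq V -> R) (e : Env) (c1 c2 : seq V) : R :=
  if `[< forall t, 0 < p t -> out e c1 t = out e c2 t >] then 1 else 0.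

End Defs.

Definition psd_kernel (R : realType) (X : Type) (k : X -> X -> R) : Prop :=
  (forall x y, k x y = k y x) /\
  (forall (n : nat) (x : 'I_n -> X) (a : 'I_n -> R),
      0 <= \sum_(i < n) \sum_(j < n) a i * a j * k (x i) (x j)).

(* For a fixed suite t, agree(., ., t) is the average over the test cases k
   of the indicator kernels 1{O_k(c1) = O_k(c2)}.  Multiplying a positive
   semi-definite kernel entrywise by such an indicator keeps it positive
   semi-definite, since it only zeroes the off-diagonal blocks of a partition.
   Averaging over k and taking the expectation over t ~ p, sim * M is positive
   semi-definite for every nonnegative positive semi-definite M, and induction
   on s handles sim ^ s.  For the limit, sim lies in [0, 1]; it equals 1 when
   the outputs agree on the support of p, and otherwise some t with p t > 0
   has agree < 1, so sim < 1 and sim ^ s tends to 0. *)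

From mathcomp Require Import all_boot all_order all_algebra.
From mathcomp Require Import all_classical all_reals all_analysis.
From mathcomp Require Import ring.
Set Implicit Arguments.
Unset Strict Implicit.
Unset Printing Implicit Defensive.
Import Order.TTheory GRing.Theory Num.Theory.
Local Open Scope ring_scope.
Local Open Scope classical_set_scope.

Definition psd_quadform (R : realDomainType) (X : Type) (k : X -> X -> R) :
    Prop :=
  forall n (x : 'I_n -> X) (a : 'I_n -> R),
    0 <= \sum_(i < n) \sum_(j < n) a i * a j * k (x i) (x j).

Section PsdQuadform.
Variables (R : realDomainType) (X : Type).
Implicit Types (k M : X -> X -> R).

Lemma eq_psd_quadform k1 k2 :
  psd_quadform k1 -> (forall x y, k1 x y = k2 x y) -> psd_quadform k2.
Proof.
by move=> k1psd k12 n x a; under eq_bigr do under eq_bigr do rewrite -k12.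
Qed.

Lemma psd_quadform_cst (c : R) : 0 <= c -> psd_quadform (fun _ _ : X => c).
Proof.
move=> c0 n x a; rewrite (_ : \sum_i _ = c * (\sum_(i < n) a i) ^+ 2).
  by rewrite mulr_ge0 ?sqr_ge0.
rewrite expr2 mulr_suml mulr_sumr; apply: eq_bigr => i _.
by rewrite mulr_sumr mulr_sumr; apply: eq_bigr => j _; ring.
Qed.

Lemma psd_quadformZ (c : R) k :
  0 <= c -> psd_quadform k -> psd_quadform (fun x y => c * k x y).
Proof.
move=> c0 kpsd n x a; under eq_bigr do under eq_bigr do rewrite mulrCA.
by under eq_bigr do rewrite -mulr_sumr; rewrite -mulr_sumr mulr_ge0.
Qed.

Lemma psd_quadform_sum (I : finType) (k : I -> X -> X -> R) :
  (forall l, psd_quadform (k l)) -> psd_quadform (fun x y => \sum_l k l x y).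
Proof.
move=> kpsd n x a; under eq_bigr do under eq_bigr do rewrite mulr_sumr.
under eq_bigr do rewrite exchange_big; rewrite exchange_big /=.
by apply: sumr_ge0 => l _; exact: kpsd.
Qed.

(* Grouping the indices by the value of [f], the form splits into one
   quadratic form of [M] per group: the coefficient vector of a group is [a]
   restricted to it, and groups are labelled by their least index. *)
Lemma psd_quadform_eq_mul (Y : Type) (f : X -> Y) M : psd_quadform M ->
  psd_quadform (fun x y => (if `[< f x = f y >] then 1 else 0) * M x y).
Proof.
move=> Mpsd n x a.
pose rep i := arg_min i (fun c => `[< f (x c) = f (x i) >]) (@nat_of_ord n).
have repP i : f (x (rep i)) = f (x i) /\
    forall c, f (x c) = f (x i) -> (rep i <= c)%N.
  rewrite /rep; case: arg_minnP; first exact/asboolP.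
  by move=> c /asboolP fc cmin; split=> // c' fc'; apply/cmin/asboolP.
have repE i j : `[< f (x i) = f (x j) >] = (rep i == rep j).
  have [fri repi] := repP i; have [frj repj] := repP j.
  apply/asboolP/eqP => [fij|rij]; last by rewrite -fri -frj rij.
  by apply/val_inj/eqP; rewrite eqn_leq repi ?repj // (fri, frj) fij.
have indE i j : (if `[< f (x i) = f (x j) >] then 1 else 0 : R) =
    \sum_(c < n) (rep i == c)%:R * (rep j == c)%:R.
  rewrite repE (bigD1 (rep i)) //= eqxx mul1r big1 ?addr0 => [|c /negbTE ric].
    by rewrite eq_sym; case: eqP.
  by rewrite eq_sym ric mul0r.
under eq_bigr do under eq_bigr do rewrite indE mulr_suml mulr_sumr.
under eq_bigr do rewrite exchange_big; rewrite exchange_big /=.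
apply: sumr_ge0 => c _.
have := Mpsd n x (fun i => a i * (rep i == c)%:R).
by congr (_ <= _); apply: eq_bigr => i _; apply: eq_bigr => j _; ring.
Qed.

End PsdQuadform.

Lemma esumZl (R : realType) (T : choiceType) (I : set T) (r : R)
    (a : T -> \bar R) : 0 <= r -> (forall i, I i -> 0 <= a i)%E ->
  (\esum_(i in I) (r%:E * a i) = r%:E * \esum_(i in I) a i)%E.
Proof.
move=> r0 a0; rewrite /esum -ereal_supZl //; last first.
  by apply/set0P; exists 0%E, set0; [exact: fsets_set0 | rewrite fsbig_set0].
have sumZ X : fsets I X ->
    (\sum_(x \in X) (r%:E * a x) = r%:E * \sum_(x \in X) a x)%E.
  move=> [finX XI]; rewrite !fsbig_finite // !big_seq ge0_sume_distrr // => i.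
  by rewrite in_fset_set // inE => /XI /a0.
congr ereal_sup; apply/seteqP; split => y /=.
- by move=> [X XI <-]; exists (\sum_(x \in X) a x)%E; [exists X | rewrite sumZ].
- by move=> [_ [X XI <-] <-]; exists X => //; rewrite sumZ.
Qed.

Definition dexpect (R : realType) (T : choiceType) (p f : T -> R) : R :=
  fine (\esum_(t in [set: T]) (p t * f t)%:E).

Section DiscreteExpectation.
Variables (R : realType) (T : choiceType) (p : T -> R).
Hypothesis p_ge0 : forall t, 0 <= p t.
Hypothesis p_sum1 : (\esum_(t in [set: T]) (p t)%:E = 1)%E.
Implicit Types (f g : T -> R) (B : R).

Lemma dexpect_ge0 f : (forall t, 0 <= f t) -> 0 <= dexpect p f.
Proof.
by move=> f0; apply/fine_ge0/esum_ge0 => t _; rewrite lee_fin mulr_ge0.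
Qed.

Lemma EFin_dexpect f B : (forall t, 0 <= f t <= B) ->
  (dexpect p f)%:E = \esum_(t in [set: T]) (p t * f t)%:E.
Proof.
move=> fB; rewrite fineK // ge0_fin_numE; last first.
  by apply: esum_ge0 => t _; rewrite lee_fin mulr_ge0 //; case/andP: (fB t).
apply: (@le_lt_trans _ _ (\esum_(t in [set: T]) (`|B|%:E * (p t)%:E))%E).
  apply: le_esum => t _; rewrite -EFinM lee_fin mulrC ler_wpM2r //.
  by case/andP: (fB t) => _ /le_trans; apply; exact: ler_norm.
rewrite esumZl => [|//|t _]; last by rewrite lee_fin.
by rewrite p_sum1 mule1 ltry.
Qed.

Lemma ler_dexpect f g B : (forall t, 0 <= f t <= g t) -> (forall t, g t <= B) ->
  dexpect p f <= dexpect p g.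
Proof.
move=> fg gB; have g0 t : 0 <= g t by case/andP: (fg t) => /le_trans; apply.
rewrite -lee_fin (@EFin_dexpect f B) => [|t]; last first.
  by case/andP: (fg t) => -> /le_trans; apply.
rewrite (@EFin_dexpect g B) => [|t]; last by rewrite g0 gB.
by apply: le_esum => t _; rewrite lee_fin ler_wpM2l //; case/andP: (fg t).
Qed.

Lemma dexpectZ (c : R) f B : 0 <= c -> (forall t, 0 <= f t <= B) ->
  dexpect p (fun t => c * f t) = c * dexpect p f.
Proof.
move=> c0 fB; apply: EFin_inj; rewrite EFinM (EFin_dexpect fB).
rewrite (@EFin_dexpect _ (c * B)) => [|t]; last first.
  by case/andP: (fB t) => f0 fB'; rewrite mulr_ge0 // ler_wpM2l.
rewrite -esumZl => [|//|t _]; last first.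
  by rewrite lee_fin mulr_ge0 //; case/andP: (fB t).
by apply: eq_esum => t _; rewrite -EFinM mulrCA.
Qed.

Lemma dexpect_sum (I : finType) (f : I -> T -> R) (B : I -> R) :
  (forall i t, 0 <= f i t <= B i) ->
  dexpect p (fun t => \sum_i f i t) = \sum_i dexpect p (f i).
Proof.
move=> fB; apply: EFin_inj; rewrite -sumEFin.
rewrite (@EFin_dexpect _ (\sum_i B i)) => [|t]; last first.
  by rewrite sumr_ge0 ?ler_sum // => i _; case/andP: (fB i t).
under [RHS]eq_bigr do rewrite (EFin_dexpect (fB _)).
rewrite -esum_sum => [|t i _ _]; last first.
  by rewrite lee_fin mulr_ge0 //; case/andP: (fB i t).
by apply: eq_esum => t _; rewrite mulr_sumr sumEFin.
Qed.

Lemma dexpect_eq1 f : (forall t, 0 < p t -> f t = 1) -> dexpect p f = 1.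
Proof.
move=> f1; rewrite /dexpect (_ : esum _ _ = 1%E) //.
rewrite -p_sum1; apply: eq_esum => t _; congr EFin.
have [/f1 ->|pt0] := ltP 0 (p t); first by rewrite mulr1.
by rewrite (_ : p t = 0) ?mul0r //; apply/le_anti; rewrite pt0 p_ge0.
Qed.

Lemma dexpect_lt1 f t0 : (forall t, 0 <= f t <= 1) -> 0 < p t0 -> f t0 < 1 ->
  dexpect p f < 1.
Proof.
move=> f01 pt0 ft0.
have gap : (0 < \esum_(t in [set: T]) (p t * (1 - f t))%:E)%E.
  apply: (@lt_le_trans _ _ (p t0 * (1 - f t0))%:E).
    by rewrite lte_fin mulr_gt0 // subr_gt0.
  apply: esum_ge; exists [set t0]; first by split; [exact: finite_set1 |].
  by rewrite fsbig_set1.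
have split1 : (1 = (dexpect p f)%:E +
    \esum_(t in [set: T]) (p t * (1 - f t))%:E)%E.
  rewrite (EFin_dexpect f01) -esumD => [||t _]; first last.
  - by rewrite lee_fin mulr_ge0 // subr_ge0; case/andP: (f01 t).
  - by move=> t _; rewrite lee_fin mulr_ge0 //; case/andP: (f01 t).
  rewrite -p_sum1; apply: eq_esum => t _.
  by rewrite -EFinD -mulrDr addrC subrK mulr1.
by rewrite -lte_fin [X in (_ < X)%E]split1 lteDl.
Qed.

(* [esum] is only additive on nonnegative series, so the sign of [a i * a j]
   is moved into the nonnegative weights [u] and [v] with
   [u - v = 2 * a i * a j]. *)
Lemma psd_quadform_dexpect (X : Type) (K : T -> X -> X -> R) (B : X -> X -> R) :
  (forall t, psd_quadform (K t)) -> (forall t x y, 0 <= K t x y <= B x y) ->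
  psd_quadform (fun x y => dexpect p (fun t => K t x y)).
Proof.
move=> Kpsd KB n x a.
pose u i j := `|a i * a j| + a i * a j.
pose v i j := `|a i * a j| - a i * a j.
have u0 i j : 0 <= u i j by rewrite -lerBlDr sub0r -normrN ler_norm.
have v0 i j : 0 <= v i j by rewrite subr_ge0 ler_norm.
have uv_form (F : 'I_n -> 'I_n -> R) :
    \sum_i \sum_j u i j * F i j - \sum_i \sum_j v i j * F i j =
    2 * \sum_i \sum_j a i * a j * F i j.
  rewrite -sumrB mulr_sumr; apply: eq_bigr => i _.
  by rewrite -sumrB mulr_sumr; apply: eq_bigr => j _; rewrite /u /v; ring.
have wKB w : (forall i j, 0 <= w i j) -> forall i j t,
    0 <= w i j * K t (x i) (x j) <= w i j * B (x i) (x j).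
  by move=> w0 i j t; case/andP: (KB t (x i) (x j)) => K0 KB';
    rewrite mulr_ge0 // ler_wpM2l.
have wKB_sum w : (forall i j, 0 <= w i j) -> forall i t,
    0 <= \sum_j w i j * K t (x i) (x j) <= \sum_j w i j * B (x i) (x j).
  move=> w0 i t; rewrite sumr_ge0 ?ler_sum // => j _.
    by case/andP: (wKB w w0 i j t).
  by case/andP: (wKB w w0 i j t).
have dexpect_form w : (forall i j, 0 <= w i j) ->
    \sum_i \sum_j w i j * dexpect p (fun t => K t (x i) (x j)) =
    dexpect p (fun t => \sum_i \sum_j w i j * K t (x i) (x j)).
  move=> w0; rewrite (dexpect_sum (wKB_sum w w0)); apply: eq_bigr => i _.
  rewrite (dexpect_sum (wKB w w0 i)); apply: eq_bigr => j _.
  by rewrite (dexpectZ (w0 i j) (fun t => KB t (x i) (x j))).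
suff : 0 <= 2 * \sum_i \sum_j a i * a j * dexpect p (fun t => K t (x i) (x j)).
  by rewrite pmulr_rge0.
rewrite -uv_form subr_ge0 !dexpect_form //.
apply: (ler_dexpect (B := \sum_i \sum_j u i j * B (x i) (x j))) => t.
  rewrite sumr_ge0 => [|i _]; last by case/andP: (wKB_sum v v0 i t).
  by rewrite -subr_ge0 uv_form /= mulr_ge0 //; apply: Kpsd.
by apply: ler_sum => i _; case/andP: (wKB_sum u u0 i t).
Qed.

End DiscreteExpectation.

Section Mean.
Variables (R : numFieldType) (n : nat) (F : 'I_n -> R).
Hypothesis F_le1 : forall k, F k <= 1.

Lemma mean_le1 : n%:R^-1 * \sum_k F k <= 1.
Proof.
have [n0|n0] := posnP n.
  by rewrite (_ : n%:R = 0) ?invr0 ?mul0r // n0.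
rewrite ler_pdivrMl ?ltr0n // mulr1 -[X in _ <= X%:R]card_ord -sumr_const.
exact: ler_sum.
Qed.

Lemma mean_lt1 k0 : F k0 < 1 -> n%:R^-1 * \sum_k F k < 1.
Proof.
have n0 : (0 < n)%N by apply: leq_ltn_trans (ltn_ord k0).
move=> Fk0; rewrite ltr_pdivrMl ?ltr0n // mulr1 -[X in _ < X%:R]card_ord.
rewrite -sumr_const (bigD1 k0) // [X in _ < X](bigD1 k0) //= ltr_leD //.
exact: ler_sum.
Qed.

End Mean.

Section TestHarness.
Variables (R : realType) (V : finType) (Env O : Type) (ncases : seq V -> nat).
Variable out : Env -> seq V -> forall t : seq V, (ncases t).-tuple O.
Variable e : Env.

Lemma agree_ge0 c1 c2 t : 0 <= agree R out e c1 c2 t.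
Proof. by rewrite mulr_ge0 ?invr_ge0 ?sumr_ge0 // => k _; case: ifP. Qed.

Lemma agree_le1 c1 c2 t : agree R out e c1 c2 t <= 1.
Proof. by apply: mean_le1 => k; case: ifP. Qed.

Lemma agree_sym c1 c2 t : agree R out e c1 c2 t = agree R out e c2 c1 t.
Proof.
congr (_ * _); apply: eq_bigr => k _.
by congr (if _ then _ else _); apply/asboolP/asboolP => ->.
Qed.

Lemma agree_eq1 c1 c2 t : (0 < ncases t)%N -> out e c1 t = out e c2 t ->
  agree R out e c1 c2 t = 1.
Proof.
move=> n0 outE; rewrite /agree outE.
under eq_bigr do rewrite asboolT //.
by rewrite sumr_const card_ord mulVf // pnatr_eq0 -lt0n.
Qed.

Lemma agree_lt1 c1 c2 t : out e c1 t <> out e c2 t -> agree R out e c1 c2 t < 1.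
Proof.
move=> outN.
have [k0 outNk0] : exists k, tnth (out e c1 t) k <> tnth (out e c2 t) k.
  by apply/existsNP => outE; apply/outN/eq_from_tnth.
apply: (@mean_lt1 _ _ _ _ k0) => [k|]; first by case: ifP.
by rewrite asboolF.
Qed.

Lemma psd_quadform_agree_mul t (M : seq V -> seq V -> R) : psd_quadform M ->
  psd_quadform (fun c1 c2 => agree R out e c1 c2 t * M c1 c2).
Proof.
move=> Mpsd.
have agree_mul k : psd_quadform (fun c1 c2 =>
    (if `[< tnth (out e c1 t) k = tnth (out e c2 t) k >] then 1 else 0) *
    M c1 c2).
  exact: (psd_quadform_eq_mul (fun c => tnth (out e c t) k)).
have n0 : 0 <= (ncases t)%:R^-1 :> R by rewrite invr_ge0.
apply: (eq_psd_quadform (psd_quadformZ n0 (psd_quadform_sum agree_mul))).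
move=> c1 c2.
by rewrite /agree -mulrA mulr_suml.
Qed.

Variable p : seq V -> R.
Hypothesis hp : is_distribution p.

Let p_ge0 : forall t, 0 <= p t := proj1 hp.
Let p_sum1 : (\esum_(t in [set: seq V]) (p t)%:E = 1)%E := proj2 hp.

Lemma simE c1 c2 : sim out p e c1 c2 = dexpect p (agree R out e c1 c2).
Proof. by []. Qed.

Lemma sim_ge0 c1 c2 : 0 <= sim out p e c1 c2.
Proof. by rewrite simE dexpect_ge0 // => t; exact: agree_ge0. Qed.

Lemma sim_sym c1 c2 : sim out p e c1 c2 = sim out p e c2 c1.
Proof.
by rewrite !simE; congr dexpect; apply/funext => t; rewrite agree_sym.
Qed.

Lemma psd_quadform_sim_mul (M : seq V -> seq V -> R) :
  (forall c1 c2, 0 <= M c1 c2) -> psd_quadform M ->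
  psd_quadform (fun c1 c2 => sim out p e c1 c2 * M c1 c2).
Proof.
move=> M0 Mpsd.
have KM t c1 c2 : 0 <= agree R out e c1 c2 t * M c1 c2 <= M c1 c2.
  by rewrite mulr_ge0 ?agree_ge0 // ler_piMl ?agree_le1.
apply: (eq_psd_quadform (psd_quadform_dexpect p_ge0 p_sum1
  (fun t => psd_quadform_agree_mul t Mpsd) KM)) => c1 c2.
rewrite simE mulrC -(dexpectZ p_ge0 p_sum1 (M0 c1 c2) (B := 1)).
  by congr dexpect; apply/funext => t; rewrite mulrC.
by move=> t; rewrite agree_ge0 agree_le1.
Qed.

Lemma psd_kernel_sim_pow s : psd_kernel (sim_pow out p e s).
Proof.
split=> [c1 c2|]; first by rewrite /sim_pow sim_sym.
elim: s => [|s IH].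
  apply: (eq_psd_quadform (psd_quadform_cst ler01)) => c1 c2.
  by rewrite /sim_pow expr0.
apply: (eq_psd_quadform (psd_quadform_sim_mul _ IH)) => c1 c2.
  by rewrite exprn_ge0 ?sim_ge0.
by rewrite /sim_pow exprS.
Qed.

Hypothesis hcases : forall t, 0 < p t -> (0 < ncases t)%N.

Lemma sim_eq1 c1 c2 : (forall t, 0 < p t -> out e c1 t = out e c2 t) ->
  sim out p e c1 c2 = 1.
Proof.
move=> outE; rewrite simE (dexpect_eq1 p_ge0 p_sum1) // => t pt.
by rewrite agree_eq1 ?hcases ?outE.
Qed.

Lemma sim_lt1 c1 c2 : ~ (forall t, 0 < p t -> out e c1 t = out e c2 t) ->
  sim out p e c1 c2 < 1.
Proof.
move=> /existsNP[t /not_implyP[pt outN]].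
rewrite simE (dexpect_lt1 p_ge0 p_sum1 (t0 := t)) ?agree_lt1 // => t'.
by rewrite agree_ge0 agree_le1.
Qed.

Lemma cvg_sim_pow c1 c2 :
  (fun s : nat => sim_pow out p e s c1 c2) @ \oo --> (sim_inf out p e c1 c2 : R^o).
Proof.
rewrite /sim_inf /sim_pow.
have [equiv|nequiv] := pselect (forall t, 0 < p t -> out e c1 t = out e c2 t).
  rewrite asboolT // sim_eq1 // (_ : (fun _ => _) = fun=> 1).
    exact: (cvg_cst (1 : R^o)).
  by apply/funext => s; rewrite expr1n.
by rewrite asboolF //; apply: cvg_expr; rewrite ger0_norm ?sim_ge0 ?sim_lt1.
Qed.

End TestHarness.

Theorem proposition4p4 (R : realType) (V : finType) (Env O : Type)
    (ncases : seq V -> nat)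
    (out : Env -> seq V -> forall t : seq V, (ncases t).-tuple O)
    (e : Env) (p : seq V -> R)
    (hp : is_distribution p)
    (hcases : forall t, 0 < p t -> (0 < ncases t)%N) :
  (forall s : nat, psd_kernel (sim_pow out p e s)) /\
  (forall c1 c2 : seq V,
      (fun s : nat => sim_pow out p e s c1 c2) @ \oo --> (sim_inf out p e c1 c2 : R^o)).
Proof.
split=> [s | c1 c2]; first exact: psd_kernel_sim_pow.
exact: cvg_sim_pow.
Qed.
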